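(* Let $q$ be a prime power, $n\geq 3$, and let $I_n(q)$ be the bipartite graph whose vertices are the $1$-dimensional and the $(n-1)$-dimensional subspaces of an $n$-dimensional vector space over the field with $q$ elements, with a $1$-dimensional subspace adjacent to an $(n-1)$-dimensional subspace if and only if it is contained in it. Then $I_n(q)$ is (isomorphic to) a Cayley graph.
   Context: For a finite group $\Gamma$ and a subset $S\subseteq\Gamma$ that does not contain the identity, is closed under inverses, and generates $\Gamma$, the Cayley graph of $\Gamma$ with respect to $S$ has vertex set $\Gamma$ and an edge between $g$ and $h$ whenever $g^{-1}h\in S$. A graph is a Cayley graph if it is isomorphic to the Cayley graph of some such pair $(\Gamma,S)$. *)

From HB Require Import structures.
From mathcomp Require Import all_boot all_algebra all_fingroup all_field.
Set Implicit Arguments. Unset Strict Implicit. Unset Printing Implicit Defensive.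

Import VectorInternalTheory.
HB.instance Definition _ (F : finFieldType) (n : nat) :=
  [Finite of {vspace 'rV[F]_n} by <:].

Local Open Scope group_scope.

Definition is_cayley_graph (V : finType) (e : rel V) : Prop :=
  exists (gT : finGroupType) (S : {set gT}),
    [/\ 1 \notin S,
        (forall s, s \in S -> s^-1 \in S),
        <<S>> = [set: gT] &
        exists f : V -> gT, bijective f /\
          forall x y : V, e x y = ((f x)^-1 * f y \in S)].

Local Close Scope group_scope.

Definition In_vertex (F : finFieldType) (n : nat) :=
  {U : {vspace 'rV[F]_n} | (\dim U == 1%N) || (\dim U == n.-1)}.

Definition In_adj (F : finFieldType) (n : nat) : rel (In_vertex F n) :=
  fun x y =>
    let U := val x in let W := val y in
    [&& \dim U == 1%N, \dim W == n.-1 & (U <= W)%VS] ||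
    [&& \dim W == 1%N, \dim U == n.-1 & (W <= U)%VS].

From HB Require Import structures.
From mathcomp Require Import all_boot all_algebra all_fingroup all_field.
From mathcomp Require Import zify.
From Stdlib Require Import Lia.
Set Implicit Arguments. Unset Strict Implicit. Unset Printing Implicit Defensive.
Import GRing.Theory VectorInternalTheory.
Local Open Scope ring_scope.

(* Identify F^n with the field L of order q^n.  Multiplication by c in L^*
   (a Singer cycle) permutes the points and the hyperplanes, and taking
   orthogonals U |-> U^perp for the nondegenerate pairing (a, b) |-> lam (a * b),
   lam a nonzero linear form, swaps points and hyperplanes and reverses
   incidence; moreover (U * c)^perp = U^perp * c^-1.  So the maps U |-> U * c
   and U |-> (U * c)^perp form a group of automorphisms.  It acts regularly on
   the vertices: the orbit of the point <[1]> is all points <[c]> and, through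
   the polarity, all hyperplanes, while an element fixing <[1]> is U |-> U * c
   with c in F, which acts trivially.  For n >= 3 any two points lie on a
   common hyperplane, so the graph is connected, and Sabidussi's theorem makes
   it a Cayley graph. *)

Lemma natr_card_finField (F : finFieldType) : #|F|%:R = 0 :> F.
Proof.
have [p _ pFp] := finPcharP F.
have := finNzRing_gt1 F; rewrite (card_pprimeChar pFp).
by case: logn => [//|k] _; rewrite natrX (pcharf0 pFp) expr0n.
Qed.

Lemma separable_Xn_sub_X (R : idomainType) m : m%:R = 0 :> R ->
  separable_poly ('X^m - 'X : {poly R}).
Proof.
move=> m0; rewrite unlock derivB derivXn derivX -scaler_nat m0 scale0r.
by rewrite sub0r -(scaleN1r 1) coprimepZr ?oppr_eq0 ?oner_eq0 // coprimep1.
Qed.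

(* L is the splitting field of X^m - X, m = q^n: its m roots are distinct and
   form the field fixed by the n-th power of the Frobenius, hence all of L. *)
Lemma exists_fieldExt_dim (F : finFieldType) n : (0 < n)%N ->
  exists L : fieldExtType F, \dim {:L} = n.
Proof.
move=> n_gt0; pose m := (#|F| ^ n)%N.
have m_gt1 : (1 < m)%N by rewrite (ltn_exp2l 0) ?finNzRing_gt1.
have /FinSplittingFieldFor[L [zs DqL defL]] : 'X^m - 'X != 0 :> {poly F}.
  by rewrite -size_poly_eq0 size_polyDl ?size_polyXn ?size_polyN ?size_polyX.
exists L; rewrite rmorphB /= rmorphXn /= map_polyX in DqL.
have m0 : m%:R = 0 :> L.
  rewrite /m -(prednK n_gt0) expnS natrM -[#|F|%:R](rmorph_nat (in_alg L)).
  by rewrite natr_card_finField rmorph0 mul0r.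
have Uzs : uniq zs.
  by rewrite -separable_prod_XsubC -(eqp_separable DqL) separable_Xn_sub_X.
have /finField_galois_generator[/= a _ Da] : (1 <= {:L})%VS by apply: sub1v.
rewrite dimv1 expn1 in Da; pose E := fixedSpace (a ^+ n)%g.
have zsE : zs =i E.
  move=> z; rewrite -root_prod_XsubC -(eqp_root DqL) (sameP fixedSpaceP eqP).
  rewrite /root !hornerE subr_eq0 /= /m; congr (_ == z).
  elim: (n) => [|i IHi]; first by rewrite gal_id.
  by rewrite expgSr expnSr exprM IHi galM ?Da ?memvf.
have EL : E = {:L}%VS.
  apply/eqP; rewrite eqEsubv subvf -defL -[E]subfield_closed agenvS //.
  by rewrite subv_add sub1v; apply/span_subvP => z; rewrite zsE.
pose finL := FinFieldExtType L.
have card_L : #|finL| = m.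
  have /eq_card-> : finL =i zs by move=> z; rewrite zsE EL memvf.
  apply: succn_inj; rewrite (card_uniqP _) //= -(size_prod_XsubC _ id).
  by rewrite -(eqp_size DqL) size_polyDl size_polyXn // size_polyN size_polyX.
have := card_vspace (fullv : {vspace finvect_type L}).
rewrite card_vspacef; change #|finvect_type L| with #|finL|.
by rewrite card_L => /eqP; rewrite eqn_exp2l ?finNzRing_gt1 // => /eqP.
Qed.

Lemma is_cayley_graph_iso (V W : finType) (eV : rel V) (eW : rel W) (h : V -> W) :
  bijective h -> {mono h : x y / eV x y >-> eW x y} ->
  is_cayley_graph eV -> is_cayley_graph eW.
Proof.
move=> [h' hK h'K] h_mono [gT [S [S1 SV genS [f [f_bij ef]]]]].
exists gT, S; split=> //; exists (f \o h'); split.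
  by apply: bij_comp => //; exists h.
by move=> x y; rewrite -ef -h_mono !h'K.
Qed.

Section Sabidussi.
Local Open Scope group_scope.
Variables (V : finType) (e : rel V) (G : {group {perm V}}) (v0 : V).
Hypotheses (e_irr : irreflexive e) (e_sym : symmetric e).
Hypothesis G_aut : forall g, g \in G -> forall x y, e (g x) (g y) = e x y.
Hypothesis G_trans : forall x, exists2 g, g \in G & g v0 = x.
Hypothesis G_free : forall g, g \in G -> g v0 = v0 -> g = 1.
Hypothesis e_conn : forall x, connect e v0 x.

Let carry x := odflt 1 [pick g in G | g v0 == x].

Let carryP x : carry x \in G /\ carry x v0 = x.
Proof.
rewrite /carry; case: pickP => [g /andP[gG /eqP] //|].
by have [g gG gx] := G_trans x => /(_ g); rewrite gG gx eqxx.
Qed.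

Let carry_uniq g : g \in G -> carry (g v0) = g.
Proof.
move=> gG; have [hG hv0] := carryP (g v0); set h := carry _ in hG hv0 *.
suff /eqP : h * g^-1 = 1 by rewrite mulg_eq1 invgK => /eqP.
by apply: G_free; rewrite ?groupM ?groupV // permM hv0 -permM mulgV perm1.
Qed.

(* Permutations compose left to right, so G acts on the right and x must be
   sent to the inverse of the element carrying v0 to x. *)
Let f x : subg_of G := (subg G (carry x))^-1.
Let S := [set s : subg_of G | e v0 (sgval s v0)].

Let fE x : sgval (f x) = (carry x)^-1.
Proof. by rewrite /f /= subgK //; case: (carryP x). Qed.

Let f_bij : bijective f.
Proof.
exists (fun s : subg_of G => ((sgval s)^-1 : {perm V}) v0) => [x | s].
  by rewrite fE invgK; case: (carryP x).
by apply: subg_inj; rewrite fE carry_uniq ?invgK ?groupV ?subgP.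
Qed.

Let f_edge x y : e x y = ((f x)^-1 * f y \in S).
Proof.
have [gx gxv] := carryP x; have [gy gyv] := carryP y.
rewrite inE morphM ?morphV ?inE //= !subgK // invgK.
by rewrite permM gxv -(G_aut gy v0) gyv permKV e_sym.
Qed.

Let f_v0 : f v0 = 1.
Proof. by apply: subg_inj; rewrite fE -[v0]perm1 carry_uniq // invg1. Qed.

Let gen_S : <<S>> = [set: subg_of G].
Proof.
apply/eqP; rewrite eqEsubset subsetT /=; apply/subsetP => s _.
have [f' _ f'K] := f_bij; rewrite -[s]f'K; move: (f' s) => x.
have /connectP[p p_path ->] := e_conn x.
elim/last_ind: p p_path => [_|p z IHp] /=; first by rewrite f_v0 group1.
rewrite rcons_path last_rcons => /andP[/IHp fp ez].
by rewrite -(mulKVg (f (last v0 p)) (f z)) groupM // mem_gen // -f_edge.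
Qed.

Theorem sabidussi : is_cayley_graph e.
Proof.
exists (subg_of G), S; split=> //.
- by rewrite inE /= perm1 e_irr.
- move=> s; rewrite !inE /= => es.
  by rewrite -(G_aut (subgP s)) -permM mulVg perm1 e_sym.
- by exists f.
Qed.

End Sabidussi.

Section Polarity.
Variables (F : fieldType) (L : fieldExtType F) (lam : {scalar L}).
Hypothesis lam_neq0 : exists e, lam e != 0.
Local Notation n := (\dim {:L}).
Implicit Types (U W : {vspace L}) (a c : L).

Definition perpv_row U a : 'rV[F]_(\dim U) := \row_i lam (a * (vbasis U)`_i).

Fact perpv_row_is_linear U : linear (perpv_row U).
Proof. by move=> k a b; apply/rowP => i; rewrite !mxE mulrDl -scalerAl linearP. Qed.

HB.instance Definition _ U :=
  GRing.isLinear.Build F L 'rV[F]_(\dim U) _ (perpv_row U) (perpv_row_is_linear U).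

Definition perpv U : {vspace L} := lker (linfun (perpv_row U)).

Lemma memv_perpv U a : reflect {in U, forall u, lam (a * u) = 0} (a \in perpv U).
Proof.
rewrite memv_ker lfunE /=; apply: (iffP eqP) => [a0 u Uu | aU].
  rewrite (coord_vbasis Uu) mulr_sumr linear_sum big1 // => i _.
  have /rowP/(_ i) := a0; rewrite !mxE => a0i.
  by rewrite -scalerAr linearZ /= a0i mulr0.
by apply/rowP => i; rewrite !mxE aU ?vbasis_mem ?mem_nth ?size_tuple.
Qed.

Lemma perpvf : perpv fullv = 0%VS.
Proof.
apply/eqP; rewrite -subv0; apply/subvP => a /memv_perpv a0; rewrite memv0.
apply/contraT => a_neq0; have [e] := lam_neq0.
by rewrite -[e](mulVKf a_neq0) a0 ?memvf ?eqxx.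
Qed.

Lemma perpvS U W : (U <= W)%VS -> (perpv W <= perpv U)%VS.
Proof.
move=> sUW; apply/subvP => a /memv_perpv aW; apply/memv_perpv => u Uu.
exact/aW/(subvP sUW).
Qed.

Lemma sub_perpv_perpv U : (U <= perpv (perpv U))%VS.
Proof.
by apply/subvP => u Uu; apply/memv_perpv => a /memv_perpv aU; rewrite mulrC aU.
Qed.

Lemma leq_dim_perpv U : (n - \dim U <= \dim (perpv U))%N.
Proof.
have := limg_ker_dim (linfun (perpv_row U)) fullv; rewrite capfv /perpv.
have := dimvS (subvf (linfun (perpv_row U) @: fullv)); rewrite dimvf dim_matrix.
lia.
Qed.

(* The bound is sharp: perpv U meets perpv U^C in perpv fullv = 0. *)
Lemma dim_perpv U : \dim (perpv U) = (n - \dim U)%N.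
Proof.
apply/eqP; rewrite eqn_leq leq_dim_perpv andbT.
have UC0 : (perpv U :&: perpv U^C = 0)%VS.
  apply/eqP; rewrite -subv0 -perpvf -(addv_complf U); apply/subvP => a.
  case/memv_capP => /memv_perpv aU /memv_perpv aC.
  apply/memv_perpv => _ /memv_addP[u Uu [w Cw ->]].
  by rewrite mulrDr linearD /= aU ?aC ?addr0.
have := dimv_disjoint_sum UC0; have := dimvS (subvf (perpv U + perpv U^C)).
have := leq_dim_perpv U^C; rewrite dimv_compl; have := dimvS (subvf U).
lia.
Qed.

Lemma perpvK U : perpv (perpv U) = U.
Proof.
apply/esym/eqP; rewrite eqEdim sub_perpv_perpv !dim_perpv.
by rewrite subKn ?dimvS ?subvf.
Qed.

Lemma perpv_sub U W : (perpv U <= perpv W)%VS = (W <= U)%VS.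
Proof. by apply/idP/idP => [/perpvS|/perpvS//]; rewrite !perpvK. Qed.

Lemma perpv_prodv_line U c : c != 0 -> perpv (U * <[c]>) = (perpv U * <[c^-1]>)%VS.
Proof.
move=> c_neq0; apply/esym/eqP; rewrite eqEdim dim_perpv.
rewrite !dim_cosetv_unit ?unitfE ?invr_eq0 // dim_perpv leqnn andbT.
rewrite -!limg_amulr; apply/subvP => _ /memv_imgP[a aU ->].
apply/memv_perpv => _ /memv_imgP[u Uu ->]; rewrite !lfunE /=.
by rewrite mulrACA mulVf // mulr1; move/memv_perpv: aU; apply.
Qed.

End Polarity.

Lemma vpick_neq0 (K : fieldType) (vT : vectType K) (U : {vspace vT}) :
  (0 < \dim U)%N -> vpick U != 0.
Proof. by rewrite vpick0 -dimv_eq0 -lt0n. Qed.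

Lemma vline_vpick (K : fieldType) (vT : vectType K) (U : {vspace vT}) :
  \dim U = 1%N -> <[vpick U]>%VS = U.
Proof.
move=> dU; apply/eqP; rewrite eqEdim -memvE memv_pick dim_vline dU.
by rewrite vpick_neq0 ?dU.
Qed.

Lemma limg_lfunK (K : fieldType) (aT rT : vectType K)
    (f : 'Hom(aT, rT)) (g : 'Hom(rT, aT)) :
  cancel f g -> cancel (fun U => f @: U)%VS (fun W => g @: W)%VS.
Proof.
move=> fK U; rewrite /= -limg_comp.
suff -> : (g \o f)%VF = \1%VF by rewrite lim1g.
by apply/lfunP => u; rewrite comp_lfunE id_lfunE fK.
Qed.

Lemma prodv_unit_sub (K : fieldType) (A : falgType K) (U W : {vspace A}) u :
  u \is a GRing.unit -> (U * <[u]> <= W * <[u]>)%VS = (U <= W)%VS.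
Proof. by move=> Uu; rewrite -!limg_amulr limg_ker0 ?lker0_amulr. Qed.

(* The library has no finType instance on {vspace vT} in general, only the one
   for row spaces 'rV[F]_n declared along with In_vertex. *)
Definition fvspace (F : finFieldType) (vT : vectType F) := {vspace vT}.
HB.instance Definition _ (F : finFieldType) (vT : vectType F) :=
  [isSub of fvspace vT for @vs2mx F vT].
HB.instance Definition _ (F : finFieldType) (vT : vectType F) :=
  [Finite of fvspace vT by <:].

Section IncidenceGraph.
Variables (F : finFieldType) (vT : vectType F) (n : nat).

Definition incidence_vertex :=
  {U : fvspace vT | (\dim U == 1%N) || (\dim U == n.-1)}.

Definition incident : rel incidence_vertex := fun x y =>
  let U := val x in let W := val y in
  [&& \dim U == 1%N, \dim W == n.-1 & (U <= W)%VS] ||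
  [&& \dim W == 1%N, \dim U == n.-1 & (W <= U)%VS].

Lemma incident_sym : symmetric incident.
Proof. by move=> x y; rewrite /incident orbC. Qed.

Lemma incident_irr : (2 < n)%N -> irreflexive incident.
Proof.
move=> n_gt2; have n1 : (n.-1 == 1%N) = false by case: n n_gt2 => [|[|[|]]].
by move=> x; rewrite /incident orbb; case: eqP => //= ->; rewrite eq_sym n1.
Qed.

End IncidenceGraph.

Lemma is_cayley_In_adj (F : finFieldType) (vT : vectType F) n : dim vT = n ->
  is_cayley_graph (@incident F vT n) -> is_cayley_graph (@In_adj F n).
Proof.
move=> <-; pose f := linfun (@v2r _ vT); pose g := linfun (@r2v _ vT).
have fK : cancel f g by move=> v; rewrite !lfunE /= v2rK.
have gK : cancel g f by move=> r; rewrite !lfunE /= r2vK.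
have kerf : lker f == 0%VS by apply/lker0P/(can_inj fK).
have kerg : lker g == 0%VS by apply/lker0P/(can_inj gK).
have dim_f U : \dim (f @: U) = \dim U by rewrite limg_dim_eq // (eqP kerf) capv0.
have dim_g W : \dim (g @: W) = \dim W by rewrite limg_dim_eq // (eqP kerg) capv0.
have hP (x : incidence_vertex vT (dim vT)) :
    (\dim (f @: val x) == 1%N) || (\dim (f @: val x) == (dim vT).-1).
  by rewrite dim_f; exact: (valP x).
have h'P (y : In_vertex F (dim vT)) :
    (\dim (g @: val y) == 1%N) || (\dim (g @: val y) == (dim vT).-1).
  by rewrite dim_g; exact: (valP y).
pose h x : In_vertex F (dim vT) := Sub (f @: val x)%VS (hP x).
pose h' y : incidence_vertex vT (dim vT) :=
  Sub ((g @: val y)%VS : fvspace vT) (h'P y).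
apply: (@is_cayley_graph_iso _ _ (@incident F vT (dim vT)) _ h).
- by exists h' => [x | y]; apply: val_inj; rewrite /= limg_lfunK.
- by move=> x y; rewrite /In_adj /incident /= !dim_f !limg_ker0.
Qed.

Section SingerPolarityGroup.
Variables (F : finFieldType) (L : fieldExtType F).
Local Notation n := (\dim {:L}).
Hypothesis n_gt2 : (2 < n)%N.
Local Notation V := (incidence_vertex L n).
Local Notation incident := (@incident F L n).
Implicit Types (c : L) (x y : V).

Let i0 : 'I_n := Ordinal (ltnW (ltnW n_gt2)).
Let lam := coord (vbasis {:L}) i0.
Let lam_neq0 : exists e, lam e != 0.
Proof.
exists (vbasis {:L})`_i0.
by rewrite /lam coord_free ?eqxx ?oner_eq0 // (basis_free (vbasisP _)).
Qed.
Local Notation perpv := (perpv lam).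

Let n1_neq1 : (n.-1 == 1%N) = false. Proof. by case: n n_gt2 => [|[|[|]]]. Qed.

Let codim_eq1 x : ((n - \dim (val x))%N == 1%N) = (\dim (val x) == n.-1).
Proof. by have := dimvS (subvf (val x)); lia. Qed.

Let codim_eq_pred x : ((n - \dim (val x))%N == n.-1) = (\dim (val x) == 1%N).
Proof. by have := dimvS (subvf (val x)); have := n_gt2; lia. Qed.

(* For c = 0 the product is the zero space, which is not a vertex, so
   vmul 0 is the identity. *)
Definition vmul c x : V := insubd x (val x * <[c]>)%VS.

Lemma val_vmul c x : c != 0 -> val (vmul c x) = (val x * <[c]>)%VS.
Proof.
move=> c_neq0; rewrite /vmul insubdK // -topredE /= dim_cosetv_unit ?unitfE //.
exact: (valP x).
Qed.

Lemma vmul0 : vmul 0 =1 id.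
Proof.
move=> x; rewrite /vmul /insubd insubF //; suff -> : \dim (val x * <[0]>) = 0%N.
  by rewrite eq_sym; case: n n_gt2 => [|[|[|]]].
by apply/eqP; rewrite -leqn0 (leq_trans (dim_prodv _ _)) // dim_vline eqxx muln0.
Qed.

Lemma vmulK c : cancel (vmul c) (vmul c^-1).
Proof.
have [-> x | c_neq0 x] := eqVneq c 0; first by rewrite invr0 !vmul0.
apply: val_inj; rewrite !val_vmul ?invr_eq0 //.
by rewrite -prodvA prodv_line mulfV // prodv1.
Qed.

Definition singer c : {perm V} := perm (can_inj (vmulK c)).

Lemma val_singer c x : c != 0 -> val (singer c x) = (val x * <[c]>)%VS.
Proof. by move=> c_neq0; rewrite permE val_vmul. Qed.

Definition vpolar x : V := insubd x (perpv (val x)).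

Lemma val_vpolar x : val (vpolar x) = perpv (val x).
Proof.
rewrite /vpolar insubdK // -topredE /= dim_perpv // codim_eq1 codim_eq_pred orbC.
exact: (valP x).
Qed.

Lemma vpolarK : involutive vpolar.
Proof. by move=> x; apply: val_inj; rewrite !val_vpolar perpvK. Qed.

Definition polarity : {perm V} := perm (inv_inj vpolarK).

Lemma val_polarity x : val (polarity x) = perpv (val x).
Proof. by rewrite permE val_vpolar. Qed.

Lemma incident_singer c x y :
  c != 0 -> incident (singer c x) (singer c y) = incident x y.
Proof.
move=> c_neq0; rewrite /incident !val_singer // !dim_cosetv_unit ?unitfE //.
by rewrite !prodv_unit_sub ?unitfE.
Qed.

Lemma incident_polarity x y : incident (polarity x) (polarity y) = incident x y.
Proof.
rewrite /incident !val_polarity !dim_perpv // !codim_eq1 !codim_eq_pred.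
by rewrite !perpv_sub // orbC andbCA [X in _ || X]andbCA.
Qed.

Lemma singerM c d : c != 0 -> d != 0 -> (singer c * singer d)%g = singer (c * d).
Proof.
move=> c_neq0 d_neq0; apply/permP => x; apply: val_inj.
by rewrite permM !val_singer ?mulf_neq0 // -prodvA prodv_line.
Qed.

Lemma singer1 : singer 1 = 1%g.
Proof.
by apply/permP => x; apply: val_inj; rewrite val_singer ?oner_eq0 // prodv1 perm1.
Qed.

Lemma polarity_invol : (polarity * polarity)%g = 1%g.
Proof.
by apply/permP => x; apply: val_inj; rewrite permM perm1 !val_polarity perpvK.
Qed.

Lemma polarity_singer c :
  c != 0 -> (polarity * singer c)%g = (singer c^-1 * polarity)%g.
Proof.
move=> c_neq0; apply/permP => x; apply: val_inj.
rewrite !permM val_singer // !val_polarity val_singer ?invr_eq0 //.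
by rewrite perpv_prodv_line ?invr_eq0 // invrK.
Qed.

Definition singer_polarity_set : {set {perm V}} :=
  [set g | [exists c : FinFieldExtType L,
            (c != 0) && ((g == singer c) || (g == singer c * polarity)%g)]].

Lemma singer_polarityP g :
  reflect (exists2 c, c != 0 & g = singer c \/ g = (singer c * polarity)%g)
          (g \in singer_polarity_set).
Proof.
rewrite inE; apply: (iffP existsP) => [[c /andP[c_neq0 /orP[]/eqP->]] | [c c_neq0 gc]].
- by exists c; [|left].
- by exists c; [|right].
by exists c; rewrite c_neq0; case: gc => ->; rewrite eqxx ?orbT.
Qed.

Lemma group_set_singer_polarity : group_set singer_polarity_set.
Proof.
apply/group_setP; split.
  by apply/singer_polarityP; exists 1; [exact: oner_neq0 | left; rewrite singer1].
move=> g h /singer_polarityP[c c_neq0 gc] /singer_polarityP[d d_neq0 hd].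
apply/singer_polarityP; have dV_neq0 : d^-1 != 0 by rewrite invr_eq0.
case: gc hd => -> [] ->.
- by exists (c * d); [rewrite mulf_neq0 | left; rewrite singerM].
- by exists (c * d); [rewrite mulf_neq0 | right; rewrite mulgA singerM].
- exists (c * d^-1); [rewrite mulf_neq0 // | right].
  by rewrite -mulgA polarity_singer // mulgA singerM.
- exists (c * d^-1); [rewrite mulf_neq0 // | left].
  rewrite -mulgA [(polarity * _)%g]mulgA polarity_singer // -mulgA.
  by rewrite polarity_invol mulg1 singerM.
Qed.

Canonical singer_polarity_group := Group group_set_singer_polarity.

Fact vertex1 : (\dim (1%VS : {vspace L}) == 1%N) || (\dim (1%VS : {vspace L}) == n.-1).
Proof. by rewrite dimv1 eqxx. Qed.

Definition v1 : V := Sub (1%VS : fvspace L) vertex1.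

Lemma val_singer_v1 c : c != 0 -> val (singer c v1) = <[c]>%VS.
Proof. by move=> c_neq0; rewrite val_singer // prod1v. Qed.

Lemma singer_polarity_transitive x :
  exists2 g, g \in singer_polarity_group & g v1 = x.
Proof.
case/orP: (valP x) => /eqP dx.
  have a_neq0 : vpick (val x) != 0 by rewrite vpick_neq0 ?dx.
  exists (singer (vpick (val x))).
    by apply/singer_polarityP; exists (vpick (val x)); last left.
  by apply: val_inj; rewrite val_singer_v1 // vline_vpick.
have dpx : \dim (perpv (val x)) = 1%N.
  by apply/eqP; rewrite dim_perpv // codim_eq1 dx.
have a_neq0 : vpick (perpv (val x)) != 0 by rewrite vpick_neq0 ?dpx.
exists (singer (vpick (perpv (val x))) * polarity)%g.
  by apply/singer_polarityP; exists (vpick (perpv (val x))); last right.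
by apply: val_inj; rewrite permM val_polarity val_singer_v1 // vline_vpick // perpvK.
Qed.

Lemma singer_polarity_free g : g \in singer_polarity_group -> g v1 = v1 -> g = 1%g.
Proof.
case/singer_polarityP => c c_neq0 [->|->] /(congr1 val).
  rewrite val_singer_v1 // => c1; apply/permP => x; apply: val_inj.
  by rewrite val_singer // c1 prodv1 perm1.
rewrite permM val_polarity val_singer_v1 // => /(congr1 (fun U => \dim U)).
by rewrite dim_perpv // dim_vline c_neq0 dimv1 subn1 => /eqP; rewrite n1_neq1.
Qed.

Let incident_point_hyperplane x y :
  \dim (val x) = 1%N -> \dim (val y) = n.-1 -> (val x <= val y)%VS ->
  incident x y && incident y x.
Proof. by move=> dx dy sxy; rewrite /incident dx dy sxy !eqxx orbT. Qed.

Lemma exists_hyperplane_over (U : {vspace L}) : (\dim U < n)%N ->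
  exists2 y : V, \dim (val y) = n.-1 & (U <= val y)%VS.
Proof.
move=> dU; have a_neq0 : vpick (perpv U) != 0.
  by rewrite vpick_neq0 // dim_perpv // subn_gt0.
exists (polarity (singer (vpick (perpv U)) v1)).
  by rewrite val_polarity val_singer_v1 // dim_perpv // dim_vline a_neq0 subn1.
rewrite val_polarity val_singer_v1 // -{1}(perpvK lam_neq0 U) perpv_sub //.
by rewrite -memvE memv_pick.
Qed.

Lemma connect_v1_point x : \dim (val x) = 1%N -> connect incident v1 x.
Proof.
move=> dx; have [|y dy] := @exists_hyperplane_over (val v1 + val x)%VS.
  by have := dimv_sum_cap (val v1) (val x); rewrite dx /= dimv1; have := n_gt2; lia.
rewrite subv_add => /andP[s1y sxy].
have /andP[e1y _] := @incident_point_hyperplane v1 y (dimv1 _) dy s1y.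
have /andP[_ eyx] := incident_point_hyperplane dx dy sxy.
exact: connect_trans (connect1 e1y) (connect1 eyx).
Qed.

Lemma connect_v1 x : connect incident v1 x.
Proof.
case/orP: (valP x) => /eqP dx; first exact: connect_v1_point.
have a_neq0 : vpick (val x) != 0 by rewrite vpick_neq0 // dx; case: n n_gt2 => [|[|]].
pose p := singer (vpick (val x)) v1.
have dp : \dim (val p) = 1%N by rewrite val_singer_v1 // dim_vline a_neq0.
have spx : (val p <= val x)%VS by rewrite val_singer_v1 // -memvE memv_pick.
have /andP[epx _] := incident_point_hyperplane dp dx spx.
exact: connect_trans (connect_v1_point dp) (connect1 epx).
Qed.

Theorem incident_cayley : is_cayley_graph incident.
Proof.
apply: (@sabidussi _ _ singer_polarity_group v1).
- exact: incident_irr.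
- exact: incident_sym.
- move=> g /singer_polarityP[c c_neq0 [->|->]] x y;
    by rewrite ?permM ?incident_polarity incident_singer.
- exact: singer_polarity_transitive.
- exact: singer_polarity_free.
- exact: connect_v1.
Qed.

End SingerPolarityGroup.

Theorem mainTheorem6 (F : finFieldType) (n : nat) :
  (3 <= n)%N -> is_cayley_graph (@In_adj F n).
Proof.
move=> n_ge3; have [L dimL] := exists_fieldExt_dim F (ltnW (ltnW n_ge3)).
apply: (@is_cayley_In_adj F L); first by rewrite -dimvf.
by rewrite -dimL; apply: incident_cayley; rewrite dimL.
Qed.
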